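(* Let $(G_n)$ be a sequence of finite $(q_n+1)$-regular graphs $G_n=(V_n,E_n)$, $q_n\in\mathbb{N}^+$, with $|V_n|\to\infty$. If the normalized spectral measures $\mu_n=\mu(G_n)$ satisfy $W_p(\mu_n,\mu_\infty)\to0$ for every $p\in[1,\infty)$, then $q_n=|V_n|^{o(1)}$, i.e. $\log q_n/\log|V_n|\to0$.
   Context: Graphs may have multi-edges and loops; adjacency matrix $A$ with $A_{ab}$ the number of directed edges from $a$ to $b$ (each undirected edge, including loops, giving two directed edges), $(q+1)$-regular meaning every vertex is the origin of $q+1$ directed edges. $\mu(G)=\frac1{|V|}\sum_k\delta_{q^{-1/2}\lambda_k(A)}$ with $\lambda_k(A)$ the eigenvalues of $A$ and $q=q_n$. Semicircle distribution $d\mu_\infty(x)=\frac1{2\pi}\sqrt{4-x^2}\mathbf 1_{|x|\le2}dx$. $W_p(\mu,\nu)=\inf_\gamma(\int|x-y|^pd\gamma)^{1/p}$ over couplings $\gamma$ of $\mu,\nu$. *)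

From HB Require Import structures.
From mathcomp Require Import all_boot all_order all_algebra.
From mathcomp Require Import all_classical all_reals all_analysis.
Set Implicit Arguments. Unset Strict Implicit. Unset Printing Implicit Defensive.
Import Order.TTheory GRing.Theory Num.Theory.
Import numFieldNormedType.Exports.
Local Open Scope classical_set_scope.
Local Open Scope ring_scope.

(* Adjacency matrix of a finite (q+1)-regular multigraph with loops on N
   vertices: A a b = number of directed edges from a to b; each undirected
   edge (including loops) gives two directed edges, so A is symmetric with
   even diagonal, and every row sums to q+1. *)
Definition regular_adjacency (N q : nat) (A : 'M[nat]_N) : Prop :=
  [/\ A^T = A,
      (forall a : 'I_N, ~~ odd (A a a)) &
      (forall a : 'I_N, (\sum_(b < N) A a b)%N = q.+1)].

Definition eigen_enum (R : realType) (N : nat) (A : 'M[nat]_N)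
    (lam : 'I_N -> R) : Prop :=
  char_poly (map_mx (fun k : nat => k%:R : R) A) = \prod_(i < N) ('X - (lam i)%:P).

Definition semicircle_density (R : realType) (x : R) : R :=
  if `|x| <= 2 then Num.sqrt (4 - x ^+ 2) / (2 * pi) else 0.

Definition coupling_emp_sc (R : realType) (N : nat) (x : 'I_N -> R)
    (gamma : probability (R * R)%type R) : Prop :=
  (forall A : set R, measurable A ->
     gamma (A `*` setT) = ((N%:R)^-1)%:E * (\sum_(i < N) \d_(x i) A))%E /\
  (forall B : set R, measurable B ->
     gamma (setT `*` B) =
       (\int[lebesgue_measure]_(y in B) (semicircle_density y)%:E)%E).

Definition W_emp_sc (R : realType) (p : R) (N : nat) (x : 'I_N -> R) : \bar R :=
  ereal_inf [set ((\int[gamma]_z ((`|z.1 - z.2| `^ p)%:E)) `^ p^-1)%E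
            | gamma in [set g | coupling_emp_sc x g]].

(* The constant vector is an eigenvector of a (q+1)-regular graph with eigenvalue q+1,
   so the normalized spectral measure has an atom of mass 1/N at
   x = (q+1)/sqrt q = s + 1/s with s = sqrt q.  Any coupling with the semicircle law,
   which lives on [-2, 2], must move that atom by at least x - 2 >= s/4 (for s >= 2),
   so W_p^p >= (s/4)^p / N.  Once W_p < 1 this forces p ln (s/4) < ln N, i.e.
   ln q < 2 ln N / p + 2 ln 4; letting p grow gives ln q / ln N -> 0. *)
From HB Require Import structures.
From mathcomp Require Import all_boot all_order all_algebra.
From mathcomp Require Import all_classical all_reals all_analysis.
From mathcomp Require Import measurable_realfun lra.
Set Implicit Arguments. Unset Strict Implicit. Unset Printing Implicit Defensive.
Import Order.TTheory GRing.Theory Num.Theory.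
Import numFieldNormedType.Exports.
Local Open Scope classical_set_scope.
Local Open Scope ring_scope.

Lemma eigen_enum_regular_degree (R : realType) (N q : nat) (A : 'M[nat]_N)
    (lam : 'I_N -> R) :
  (0 < N)%N -> regular_adjacency q A -> eigen_enum A lam ->
  exists i, lam i = q.+1%:R.
Proof.
move=> N_gt0 [AT _ A_row] A_char.
set B := map_mx (fun k : nat => k%:R : R) A.
have : eigenvalue B q.+1%:R.
  apply/eigenvalueP; exists (const_mx 1).
    apply/rowP => j; rewrite !mxE.
    under eq_bigr => i _ do rewrite !mxE mul1r.
    rewrite mulr1 -natr_sum -(A_row j); congr (_%:R).
    by apply: eq_bigr => i _; rewrite -{1}AT mxE.
  apply/negP => /eqP/rowP/(_ (Ordinal N_gt0)); rewrite !mxE => /eqP.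
  by rewrite oner_eq0.
rewrite eigenvalue_root_char A_char /root horner_prod.
move=> /prodf_eq0 [i _]; rewrite hornerXsubC subr_eq0 => /eqP ->.
by exists i.
Qed.

Section CouplingCost.
Local Open Scope ereal_scope.
Variables (R : realType) (N : nat) (x : 'I_N -> R) (p : R).
Hypothesis p_ge0 : (0 <= p)%R.

Lemma measurable_dist_powR :
  measurable_fun [set: (R * R)%type]
    (fun z : (R * R)%type => (`|z.1 - z.2| `^ p)%:E : \bar R).
Proof.
apply/measurable_EFinP; apply: (measurableT_comp (measurable_powR p)).
apply: (measurableT_comp (@normr_measurable R setT)).
exact: measurable_funB.
Qed.

(* The semicircle marginal puts no mass outside [-2, 2], so the atom at [x i]
   is transported into [-2, 2] at distance at least [x i - 2]. *)
Lemma coupling_emp_sc_cost_ge (i : 'I_N) (gamma : probability (R * R)%type R) :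
  coupling_emp_sc x gamma -> (2 <= x i)%R ->
  ((N%:R)^-1 * (x i - 2) `^ p)%:E <= \int[gamma]_z (`|z.1 - z.2| `^ p)%:E.
Proof.
move=> [gamma_l gamma_r] xi_ge2.
set I2 := `[(-2)%R, 2%R]%classic : set R.
have mI2 : measurable I2 by exact: measurable_itv.
have mxi : measurable [set x i] by exact: measurable_set1.
set S := [set x i] `*` I2.
have mS : measurable S by exact: measurableX.
have mSc : measurable ([set: R] `*` ~` I2) by apply: measurableX => //; exact: measurableC.
have out_null : gamma (setT `*` ~` I2) = 0.
  rewrite gamma_r; last exact: measurableC.
  apply: integral0_eq => y I2y; rewrite /semicircle_density ifF //.
  apply/negbTE/negP => y2; apply: I2y.
  by rewrite /I2 /= in_itv /= -ler_norml.
have atom_mass : ((N%:R)^-1)%:E <= gamma ([set x i] `*` setT).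
  rewrite gamma_l // -[X in X <= _]mule1.
  apply: lee_wpmul2l; first by rewrite lee_fin invr_ge0.
  rewrite (bigD1 i) //= diracE mem_set //; apply: leeDl.
  by apply: sume_ge0 => j _; exact: measure_ge0.
have S_mass : ((N%:R)^-1)%:E <= gamma S.
  apply: (le_trans atom_mass); apply: (@le_trans _ _ (gamma (S `|` setT `*` ~` I2))).
    apply: le_measure; rewrite ?inE; [exact: measurableX|exact: measurableU|].
    move=> [a b] [/= -> _].
    by have [I2b|I2b] := pselect (I2 b); [left|right].
  apply: (le_trans (measureU2 _ _ _)) => //.
  rewrite -[leRHS]adde0; apply: leeD => //.
  by rewrite le_eqVlt; apply/orP; left; apply/eqP; exact: out_null.
have cost_ge0 z : 0 <= (`|z.1 - z.2| `^ p)%:E by rewrite lee_fin powR_ge0.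
apply: (@le_trans _ _ (\int[gamma]_(z in S) (`|z.1 - z.2| `^ p)%:E)); last first.
  by apply: ge0_subset_integral => //; exact: measurable_dist_powR.
apply: (@le_trans _ _ (\int[gamma]_(z in S) (cst ((x i - 2) `^ p)%:E z))); last first.
  apply: ge0_le_integral => //; first by move=> z _; rewrite lee_fin powR_ge0.
    exact: measurable_funS measurable_dist_powR.
  move=> [a b] [/= -> I2b]; rewrite lee_fin.
  apply: ge0_ler_powR => //; rewrite ?nnegrE ?subr_ge0 //.
  move: I2b; rewrite /I2 /= in_itv /= => /andP [_ b_le2].
  by apply: le_trans (ler_norm _); rewrite lerD2l lerN2.
rewrite integral_cst // EFinM muleC; apply: lee_wpmul2l => //.
by rewrite lee_fin powR_ge0.
Qed.

Lemma W_emp_sc_lt1_atom (i : 'I_N) :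
  W_emp_sc p x < 1 -> (2 <= x i)%R -> ((x i - 2) `^ p < N%:R)%R.
Proof.
move=> /ereal_inf_lt [_ [gamma gamma_cpl <-] W_lt1] xi_ge2.
have cost_lt1 : \int[gamma]_z (`|z.1 - z.2| `^ p)%:E < 1.
  rewrite ltNge; apply/negP => cost_ge1; move: W_lt1; rewrite ltNge => /negP; apply.
  rewrite -(poweR1r p^-1); apply: gt0_ler_poweR => //.
  - by rewrite invr_ge0.
  - by rewrite in_itv /= leey andbT.
  - rewrite in_itv /= leey andbT; apply: integral_ge0 => z _.
    by rewrite lee_fin powR_ge0.
have := le_lt_trans (coupling_emp_sc_cost_ge gamma_cpl xi_ge2) cost_lt1.
have N_gt0 : (0 < N)%N := leq_ltn_trans (leq0n i) (ltn_ord i).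
by rewrite lte_fin mulrC ltr_pdivrMr ?ltr0n // mul1r.
Qed.

End CouplingCost.

Lemma addr_inv_ge2 (R : realFieldType) (s : R) : 0 < s -> 2 <= s + s^-1.
Proof.
move=> s_gt0; rewrite -(ler_pM2r s_gt0) [leRHS]mulrDl mulVf ?gt_eqF //.
by have := sqr_ge0 (s - 1); nra.
Qed.

Lemma quarter_le_addr_inv_sub2 (R : realFieldType) (s : R) :
  2 <= s -> s / 4 <= s + s^-1 - 2.
Proof.
move=> s_ge2; have s_gt0 : 0 < s by lra.
have s_inv : s * s^-1 = 1 by rewrite mulfV ?gt_eqF.
have : 0 < s^-1 by rewrite invr_gt0.
nra.
Qed.

Lemma ln_lt_of_atom_gap (R : realType) (s M p : R) :
  1 <= s -> 1 <= M -> 0 < p -> (s + s^-1 - 2) `^ p < M ->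
  ln (s ^+ 2) < 2 * (ln M / p + ln 4).
Proof.
move=> s_ge1 M_ge1 p_gt0 gap_lt.
have s_gt0 : 0 < s by lra.
have lnM_ge0 : 0 <= ln M by exact: ln_ge0.
suff : ln s < ln M / p + ln 4 by rewrite lnXn // mulr_natl mulr2n; lra.
have [s_ge2|s_lt2] := leP 2 s; last first.
  have : ln s < ln 4 by rewrite ltr_ln ?posrE; lra.
  have : 0 <= ln M / p by rewrite divr_ge0 // ltW.
  lra.
have gap_ge := quarter_le_addr_inv_sub2 s_ge2.
have : ln ((s / 4) `^ p) < ln M.
  rewrite ltr_ln ?posrE ?powR_gt0 //; try lra.
  by apply: le_lt_trans gap_lt; apply: ge0_ler_powR; rewrite ?nnegrE; lra.
rewrite ln_powR ln_div ?posrE //.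
have : ln M / p * p = ln M by rewrite divfK ?gt_eqF.
nra.
Qed.

Lemma ratio_le_of_lt (R : realFieldType) (a b p c e : R) :
  0 < e -> 0 < c -> 4 / e <= p -> 4 * c / e <= b ->
  a < 2 * (b / p + c) -> a / b <= e.
Proof.
move=> e_gt0 c_gt0 p_ge b_ge a_lt.
have b_gt0 : 0 < b by apply: lt_le_trans b_ge; rewrite !mulr_gt0 ?invr_gt0.
have p_gt0 : 0 < p by apply: lt_le_trans p_ge; rewrite mulr_gt0 ?invr_gt0.
have pe_ge4 : 4 <= p * e by rewrite -ler_pdivrMr.
have be_ge : 4 * c <= b * e by rewrite -ler_pdivrMr.
have bp_ge0 : 0 <= b / p by rewrite divr_ge0 // ltW.
have : b / p * (p * e - 4) >= 0 by rewrite mulr_ge0 // subr_ge0.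
have : b / p * p = b by rewrite divfK ?gt_eqF.
rewrite ler_pdivrMr //; nra.
Qed.

Theorem lemma4p1 (R : realType) (N q : nat -> nat)
    (A : forall n, 'M[nat]_(N n)) (lam : forall n, 'I_(N n) -> R) :
  (forall n, (0 < N n)%N) ->
  (forall n, (0 < q n)%N) ->
  (forall n, regular_adjacency (q n) (A n)) ->
  (forall n, eigen_enum (A n) (lam n)) ->
  ((fun n => (N n)%:R : R) @ \oo --> +oo) ->
  (forall p : R, 1 <= p ->
     (fun n => W_emp_sc p (fun i => (Num.sqrt ((q n)%:R))^-1 * lam n i))
       @ \oo --> 0%E) ->
  (fun n => ln ((q n)%:R : R) / ln ((N n)%:R)) @ \oo --> 0.
Proof.
move=> N_gt0 q_gt0 A_reg A_eig N_oo W_to0.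
apply/cvgrPdist_le => e e_gt0.
set p : R := 4 / e + 1.
have p_ge1 : 1 <= p by rewrite lerDr divr_ge0 // ltW.
have ln4_gt0 : 0 < ln (4 : R) by apply: ln_gt0; lra.
near=> n.
have W_lt1 : (W_emp_sc p (fun i => ((Num.sqrt (q n)%:R)^-1 * lam n i)%R) < 1)%E.
  by near: n; exact: (W_to0 p p_ge1 _ (open_ereal_lt' (@lte01 R))).
have lnN_ge : 4 * ln 4 / e <= ln (N n)%:R.
  rewrite -[leLHS]expRK ler_ln ?posrE ?expR_gt0 //; last by rewrite ltr0n.
  by near: n; move/cvgryPge : N_oo; apply.
have [i lam_i] := eigen_enum_regular_degree (N_gt0 n) (A_reg n) (A_eig n).
pose s : R := Num.sqrt (q n)%:R.
have q_ge1 : (1 : R) <= (q n)%:R by rewrite ler1n.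
have s_ge1 : 1 <= s by rewrite -sqrtr1 ler_wsqrtr.
have q_sq : (q n)%:R = s ^+ 2 by rewrite sqr_sqrtr // ler0n.
have atom : s^-1 * lam n i = s + s^-1.
  by rewrite lam_i -natr1 q_sq mulrDr mulr1 expr2 mulKf // gt_eqF //; lra.
have := W_emp_sc_lt1_atom (le_trans ler01 p_ge1) (i := i) W_lt1.
rewrite /= -/s atom => /(_ (addr_inv_ge2 (lt_le_trans ltr01 s_ge1))) gap_lt.
have N_ge1 : (1 : R) <= (N n)%:R by rewrite ler1n.
have lnq_lt := ln_lt_of_atom_gap s_ge1 N_ge1 (lt_le_trans ltr01 p_ge1) gap_lt.
have lnN_gt0 : 0 < ln ((N n)%:R : R).
  by rewrite (lt_le_trans _ lnN_ge) // !mulr_gt0 ?invr_gt0.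
rewrite -q_sq in lnq_lt.
rewrite sub0r normrN ger0_norm; last by rewrite divr_ge0 ?ln_ge0 // ltW.
by apply: (ratio_le_of_lt e_gt0 ln4_gt0 _ lnN_ge lnq_lt); rewrite lerDl.
Unshelve. all: by end_near.
Qed.
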